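(* Let $\mathcal{X}_1,\mathcal{X}_2$ be non-empty sets (of arbitrary cardinality), let $\mathcal{B}_1\subseteq\mathcal{P}(\mathcal{X}_1)\setminus\{\emptyset\}$ and $\mathcal{B}_2\subseteq\mathcal{P}(\mathcal{X}_2)\setminus\{\emptyset\}$ be arbitrary sets of conditioning events, and for $i\in\{1,2\}$ let $\mathcal{D}_i$ be a coherent set of desirable gambles on $\mathcal{X}_i$. Then $$\mathcal{D}_1\otimes\mathcal{D}_2:=\mathcal{E}\big(\mathcal{A}_{1\to2}\cup\mathcal{A}_{2\to1}\big),$$ where $\mathcal{A}_{1\to2}:=\{f_2(X_2)\mathbb{I}_{B_1}(X_1)\colon f_2\in\mathcal{D}_2,\ B_1\in\mathcal{B}_1\cup\{\mathcal{X}_1\}\}$ and $\mathcal{A}_{2\to1}:=\{f_1(X_1)\mathbb{I}_{B_2}(X_2)\colon f_1\in\mathcal{D}_1,\ B_2\in\mathcal{B}_2\cup\{\mathcal{X}_2\}\}$, is the independent natural extension of $\mathcal{D}_1$ and $\mathcal{D}_2$; that is, it is an independent product of $\mathcal{D}_1$ and $\mathcal{D}_2$, and it is a subset of every independent product of $\mathcal{D}_1$ and $\mathcal{D}_2$.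
   Context: A gamble on a non-empty set $\mathcal{X}$ is a bounded function $\mathcal{X}\to\mathbb{R}$; $\mathcal{G}(\mathcal{X})$ denotes the set of gambles and $\mathcal{G}_{>0}(\mathcal{X})$ the set of non-negative gambles that are not identically zero. $\mathbb{I}_A$ is the indicator of $A$. For $\mathcal{A}\subseteq\mathcal{G}(\mathcal{X})$, $\mathrm{posi}(\mathcal{A}):=\{\sum_{i=1}^n\lambda_if_i\colon n\in\mathbb{N}, \lambda_i\in\mathbb{R}_{>0}, f_i\in\mathcal{A}\}$ and $\mathcal{E}(\mathcal{A}):=\mathrm{posi}(\mathcal{A}\cup\mathcal{G}_{>0}(\mathcal{X}))$. A coherent set of desirable gambles on $\mathcal{X}$ is a set $\mathcal{D}\subseteq\mathcal{G}(\mathcal{X})$ such that for all $f,g\in\mathcal{G}(\mathcal{X})$ and $\lambda>0$: (D1) if $f\geq0$ and $f\neq0$ then $f\in\mathcal{D}$; (D2) if $f\in\mathcal{D}$ then $\lambda f\in\mathcal{D}$; (D3) if $f,g\in\mathcal{D}$ then $f+g\in\mathcal{D}$; (D4) if $f\leq0$ then $f\notin\mathcal{D}$. For $i\in\{1,2\}$, a gamble $f$ on $\mathcal{X}_i$ is identified with its cylindrical extension $f(X_i)$ on $\mathcal{X}_1\times\mathcal{X}_2$, $f(X_i)(x_1,x_2):=f(x_i)$; similarly an event $B\subseteq\mathcal{X}_1$ is identified with $B\times\mathcal{X}_2$ and $B\subseteq\mathcal{X}_2$ with $\mathcal{X}_1\times B$. For a set $\mathcal{D}$ of gambles on $\mathcal{X}_1\times\mathcal{X}_2$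 and $\{i,j\}=\{1,2\}$, let $\mathrm{marg}_i(\mathcal{D}):=\{f\in\mathcal{G}(\mathcal{X}_i)\colon f(X_i)\in\mathcal{D}\}$ and, for non-empty $B_j\subseteq\mathcal{X}_j$, $\mathrm{marg}_i(\mathcal{D}\rfloor B_j):=\{f\in\mathcal{G}(\mathcal{X}_i)\colon f(X_i)\mathbb{I}_{B_j}(X_j)\in\mathcal{D}\}$. A coherent set of desirable gambles $\mathcal{D}$ on $\mathcal{X}_1\times\mathcal{X}_2$ is epistemically independent (w.r.t. $\mathcal{B}_1,\mathcal{B}_2$) if $\mathrm{marg}_i(\mathcal{D}\rfloor B_j)=\mathrm{marg}_i(\mathcal{D})$ for all $\{i,j\}=\{1,2\}$ and all $B_j\in\mathcal{B}_j$. An independent product of $\mathcal{D}_1$ and $\mathcal{D}_2$ is an epistemically independent coherent set of desirable gambles $\mathcal{D}$ on $\mathcal{X}_1\times\mathcal{X}_2$ with $\mathrm{marg}_1(\mathcal{D})=\mathcal{D}_1$ and $\mathrm{marg}_2(\mathcal{D})=\mathcal{D}_2$. The independent natural extension is the smallest (w.r.t. inclusion) independent product. *)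

From Stdlib Require Import Reals List Classical ClassicalEpsilon.
Open Scope R_scope.

(* A gamble on X: a bounded function X -> R. *)
Definition bounded {X : Type} (f : X -> R) : Prop :=
  exists M : R, forall x, Rabs (f x) <= M.

Definition gset (X : Type) := (X -> R) -> Prop.

Definition Gpos {X : Type} : gset X :=
  fun f => bounded f /\ (forall x, 0 <= f x) /\ (exists x, f x <> 0).

Definition posi {X : Type} (A : gset X) : gset X :=
  fun f => exists l : list (R * (X -> R)),
    l <> nil /\
    Forall (fun p => 0 < fst p /\ A (snd p)) l /\
    (forall x, f x = fold_right (fun p acc => fst p * snd p x + acc) 0 l).

Definition E {X : Type} (A : gset X) : gset X :=
  posi (fun f => A f \/ Gpos f).

Definition coherent {X : Type} (D : gset X) : Prop :=
  (forall f, D f -> bounded f) /\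
  (forall f, bounded f -> (forall x, 0 <= f x) -> (exists x, f x <> 0) -> D f) /\
  (forall f (lam : R), 0 < lam -> D f -> D (fun x => lam * f x)) /\
  (forall f g, D f -> D g -> D (fun x => f x + g x)) /\
  (forall f, bounded f -> (forall x, f x <= 0) -> ~ D f).

Definition ind {X : Type} (B : X -> Prop) (x : X) : R :=
  if excluded_middle_informative (B x) then 1 else 0.

Definition marg1 {X1 X2 : Type} (D : gset (X1 * X2)) : gset X1 :=
  fun f => bounded f /\ D (fun z => f (fst z)).
Definition marg2 {X1 X2 : Type} (D : gset (X1 * X2)) : gset X2 :=
  fun f => bounded f /\ D (fun z => f (snd z)).
Definition cmarg1 {X1 X2 : Type} (D : gset (X1 * X2)) (B2 : X2 -> Prop) : gset X1 :=
  fun f => bounded f /\ D (fun z => f (fst z) * ind B2 (snd z)).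
Definition cmarg2 {X1 X2 : Type} (D : gset (X1 * X2)) (B1 : X1 -> Prop) : gset X2 :=
  fun f => bounded f /\ D (fun z => f (snd z) * ind B1 (fst z)).

Definition gset_eq {X : Type} (A B : gset X) : Prop := forall f, A f <-> B f.

Definition epist_indep {X1 X2 : Type}
    (BB1 : (X1 -> Prop) -> Prop) (BB2 : (X2 -> Prop) -> Prop)
    (D : gset (X1 * X2)) : Prop :=
  coherent D /\
  (forall B2, BB2 B2 -> gset_eq (cmarg1 D B2) (marg1 D)) /\
  (forall B1, BB1 B1 -> gset_eq (cmarg2 D B1) (marg2 D)).

Definition indep_product {X1 X2 : Type}
    (BB1 : (X1 -> Prop) -> Prop) (BB2 : (X2 -> Prop) -> Prop)
    (D1 : gset X1) (D2 : gset X2) (D : gset (X1 * X2)) : Prop :=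
  epist_indep BB1 BB2 D /\ gset_eq (marg1 D) D1 /\ gset_eq (marg2 D) D2.

Definition A12 {X1 X2 : Type} (BB1 : (X1 -> Prop) -> Prop) (D2 : gset X2)
  : gset (X1 * X2) :=
  fun g => exists f2 B1, D2 f2 /\ (BB1 B1 \/ B1 = (fun _ => True)) /\
    g = (fun z => f2 (snd z) * ind B1 (fst z)).
Definition A21 {X1 X2 : Type} (BB2 : (X2 -> Prop) -> Prop) (D1 : gset X1)
  : gset (X1 * X2) :=
  fun g => exists f1 B2, D1 f1 /\ (BB2 B2 \/ B2 = (fun _ => True)) /\
    g = (fun z => f1 (fst z) * ind B2 (snd z)).

Definition indep_nat_ext {X1 X2 : Type}
    (BB1 : (X1 -> Prop) -> Prop) (BB2 : (X2 -> Prop) -> Prop)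
    (D1 : gset X1) (D2 : gset X2) : gset (X1 * X2) :=
  E (fun g => A12 BB1 D2 g \/ A21 BB2 D1 g).

(* Every independent product contains the generators [A12] and [A21], because its conditional
   marginals are [D1] and [D2], and it is closed under [E]; this gives minimality.  For the converse, the
   key point is that if [f(X1) I_C(X2)] dominates a positive combination [g] of generators, then
   [f] is in [D1]: integrate out [X2] against a finitely supported non-negative weighting [nu] that
   is positive on all the [X2]-gambles occurring in [g] and on [I_C].  Each generator then
   integrates to an element of [D1], hence so does [g], and [f] dominates that integral divided by
   [nu(I_C)].  The same integration shows that [E] avoids non-positive gambles.  The weighting exists
   for finitely many elements of any coherent set: this is a theorem of the alternative, proved by
   Fourier-Motzkin elimination of one gamble at a time. *)

From Stdlib Require Import Reals List Classical ClassicalEpsilon FunctionalExtensionality Lra.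
Open Scope R_scope.

Definition wsum {Y : Type} (nu : list (R * Y)) (g : Y -> R) : R :=
  fold_right (fun p acc => fst p * g (snd p) + acc) 0 nu.

Definition nonneg_weights {Y : Type} (nu : list (R * Y)) : Prop :=
  Forall (fun p => 0 <= fst p) nu.

Lemma wsum_app {Y : Type} (nu mu : list (R * Y)) g : wsum (nu ++ mu) g = wsum nu g + wsum mu g.
Proof. induction nu as [|p nu IH]; simpl; [ring|]. unfold wsum in *. rewrite IH. ring. Qed.

Lemma wsum_add {Y : Type} (nu : list (R * Y)) f g :
  wsum nu (fun y => f y + g y) = wsum nu f + wsum nu g.
Proof. induction nu as [|p nu IH]; simpl; [ring|]. unfold wsum in *. rewrite IH. ring. Qed.

Lemma wsum_scal {Y : Type} (nu : list (R * Y)) c g : wsum nu (fun y => c * g y) = c * wsum nu g.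
Proof. induction nu as [|p nu IH]; simpl; [ring|]. unfold wsum in *. rewrite IH. ring. Qed.

Lemma wsum_scal_r {Y : Type} (nu : list (R * Y)) c g : wsum nu (fun y => g y * c) = wsum nu g * c.
Proof. induction nu as [|p nu IH]; simpl; [ring|]. unfold wsum in *. rewrite IH. ring. Qed.

Lemma wsum_zero {Y : Type} (nu : list (R * Y)) : wsum nu (fun _ => 0) = 0.
Proof. induction nu as [|p nu IH]; simpl; [ring|]. unfold wsum in *. rewrite IH. ring. Qed.

Lemma wsum_map {Y Z : Type} (nu : list (R * Z)) (F : Z -> Y) g :
  wsum (map (fun p => (fst p, F (snd p))) nu) g = wsum nu (fun z => g (F z)).
Proof. induction nu as [|p nu IH]; simpl; [ring|]. unfold wsum in *. rewrite IH. ring. Qed.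

Lemma wsum_rescale {Y : Type} (nu : list (R * Y)) k g :
  wsum (map (fun p => (k * fst p, snd p)) nu) g = k * wsum nu g.
Proof. induction nu as [|p nu IH]; simpl; [ring|]. unfold wsum in *. rewrite IH. ring. Qed.

Lemma wsum_comm {Y Z : Type} (nu : list (R * Y)) (mu : list (R * Z)) (F : Y -> Z -> R) :
  wsum nu (fun y => wsum mu (F y)) = wsum mu (fun z => wsum nu (fun y => F y z)).
Proof.
  induction nu as [|p nu IH]; simpl.
  - symmetry. apply wsum_zero.
  - change (fst p * wsum mu (F (snd p)) + wsum nu (fun y => wsum mu (F y))
            = wsum mu (fun z => fst p * F (snd p) z + wsum nu (fun y => F y z))).
    rewrite IH, wsum_add, wsum_scal. reflexivity.
Qed.

Lemma wsum_nonneg {Y : Type} (nu : list (R * Y)) g :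
  nonneg_weights nu -> (forall y, 0 <= g y) -> 0 <= wsum nu g.
Proof.
  intros Hnu Hg. induction Hnu as [|p nu Hp _ IH]; unfold wsum in *; simpl; [lra|].
  specialize (Hg (snd p)).
  assert (0 <= fst p * g (snd p)) by (apply Rmult_le_pos; assumption). lra.
Qed.

Lemma wsum_le {Y : Type} (nu : list (R * Y)) f g :
  nonneg_weights nu -> (forall y, f y <= g y) -> wsum nu f <= wsum nu g.
Proof.
  intros Hnu Hfg.
  assert (H : 0 <= wsum nu (fun y => g y + -1 * f y)).
  { apply wsum_nonneg; [exact Hnu|]. intros y. specialize (Hfg y). lra. }
  rewrite wsum_add, wsum_scal in H. lra.
Qed.

Definition cone {Y : Type} (P : gset Y) : Prop :=
  (forall g lam, 0 < lam -> P g -> P (fun y => lam * g y)) /\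
  (forall f g, P f -> P g -> P (fun y => f y + g y)).

Lemma nonneg_multiplier {Y : Type} (c g : Y -> R) (y0 : Y) :
  0 < c y0 ->
  (forall y, 0 <= c y -> g y <= 0) ->
  (forall y z, 0 < c y -> c z < 0 -> c y * g z - c z * g y <= 0) ->
  exists l, 0 <= l /\ forall y, l * c y + g y <= 0.
Proof.
  intros Hy0 Hnonneg Hpair.
  destruct (classic (exists z, c z < 0)) as [[z0 Hz0] | Hnoneg].
  2: { exists 0. split; [lra|]. intros y. rewrite Rmult_0_l, Rplus_0_l. apply Hnonneg.
       apply Rnot_lt_le. intros Hy. apply Hnoneg. eauto. }
  (* [l] must lie between the lower bounds [g z / - c z] (for [c z < 0]) and the upper bounds
     [- g y / c y] (for [c y > 0]); the pair condition says exactly that they are ordered. *)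
  set (S := fun t => exists z, c z < 0 /\ t = g z / - c z).
  assert (Hub : forall y, 0 < c y -> is_upper_bound S (- g y / c y)).
  { intros y Hy t [z [Hz ->]]. specialize (Hpair y z Hy Hz).
    apply (Rmult_le_reg_r (c y * - c z)); [nra|].
    replace (g z / - c z * (c y * - c z)) with (g z * c y) by (field; lra).
    replace (- g y / c y * (c y * - c z)) with (g y * c z) by (field; lra). nra. }
  destruct (completeness S) as [s [Hs_ub Hs_least]].
  { exists (- g y0 / c y0). apply Hub, Hy0. }
  { exists (g z0 / - c z0). exists z0. auto. }
  exists (Rmax 0 s). split; [apply Rmax_l|]. intros y.
  destruct (Rtotal_order (c y) 0) as [Hc | [Hc | Hc]].
  - assert (Hle : g y / - c y <= Rmax 0 s).
    { apply Rle_trans with s; [apply Hs_ub; exists y; auto | apply Rmax_r]. }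
    apply (Rmult_le_compat_r (- c y)) in Hle; [|lra].
    replace (g y / - c y * - c y) with (g y) in Hle by (field; lra). lra.
  - rewrite Hc, Rmult_0_r, Rplus_0_l. apply Hnonneg. lra.
  - assert (Hle : Rmax 0 s <= - g y / c y).
    { apply Rmax_lub.
      + unfold Rdiv. apply Rmult_le_pos; [|left; apply Rinv_0_lt_compat; lra].
        specialize (Hnonneg y). lra.
      + apply Hs_least, Hub, Hc. }
    apply (Rmult_le_compat_r (c y)) in Hle; [|lra].
    replace (- g y / c y * c y) with (- g y) in Hle by (field; lra). lra.
Qed.

Lemma exists_dominating_scale (ps : list (R * R)) :
  Forall (fun p => 0 < snd p) ps -> exists K, 0 <= K /\ Forall (fun p => 0 < fst p + K * snd p) ps.
Proof.
  induction 1 as [|[a b] ps Hb Hpos [K [HK Hps]]]; [exists 0; split; [lra | constructor]|].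
  simpl in Hb. set (K' := Rmax K (Rabs a / b + 1)).
  assert (HKK' : K <= K') by apply Rmax_l.
  exists K'. split; [lra|]. constructor.
  - simpl. assert (Hb' : (Rabs a / b + 1) * b <= K' * b) by (apply Rmult_le_compat_r; [lra | apply Rmax_r]).
    replace ((Rabs a / b + 1) * b) with (Rabs a + b) in Hb' by (field; lra).
    pose proof (Rle_abs (- a)) as Ha. rewrite Rabs_Ropp in Ha. lra.
  - rewrite Forall_forall in *. intros [a' b'] Hin.
    specialize (Hps _ Hin). specialize (Hpos _ Hin). simpl in *.
    assert (K * b' <= K' * b') by (apply Rmult_le_compat_r; lra). lra.
Qed.

Section FourierMotzkin.
Variables (Y : Type) (c : Y -> R).

Definition fm_index : Type :=
  ({y : Y | 0 <= c y} + {yz : Y * Y | 0 < c (fst yz) /\ c (snd yz) < 0})%type.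

Definition fm_transform (g : Y -> R) (i : fm_index) : R :=
  match i with
  | inl y => g (proj1_sig y)
  | inr yz => let (y, z) := proj1_sig yz in c y * g z - c z * g y
  end.

Definition fm_pullback (p : R * fm_index) : list (R * Y) :=
  match snd p with
  | inl y => (fst p, proj1_sig y) :: nil
  | inr yz => let (y, z) := proj1_sig yz in (fst p * c y, z) :: (fst p * - c z, y) :: nil
  end.

Lemma wsum_fm_pullback nu g : wsum (flat_map fm_pullback nu) g = wsum nu (fm_transform g).
Proof.
  induction nu as [|p nu IH]; [reflexivity|]. cbn [flat_map]. rewrite wsum_app, IH.
  destruct p as [w [[y Hy] | [[y z] Hyz]]]; unfold wsum; simpl; ring.
Qed.

Lemma fm_pullback_nonneg nu : nonneg_weights nu -> nonneg_weights (flat_map fm_pullback nu).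
Proof.
  induction 1 as [|p nu Hp _ IH]; [constructor|]. cbn [flat_map]. apply Forall_app. split; [|exact IH].
  destruct p as [w [[y Hy] | [[y z] [Hy Hz]]]]; simpl in *;
    repeat apply Forall_cons; try apply Forall_nil; simpl; nra.
Qed.

Lemma fm_transform_self_nonneg i : 0 <= fm_transform c i.
Proof. destruct i as [[y Hy] | [[y z] Hyz]]; simpl; [exact Hy | lra]. Qed.

Lemma fm_transform_scal g lam :
  fm_transform (fun y => lam * g y) = fun i => lam * fm_transform g i.
Proof. apply functional_extensionality. intros [[y Hy] | [[y z] Hyz]]; simpl; ring. Qed.

Lemma fm_transform_add g h :
  fm_transform (fun y => g y + h y) = fun i => fm_transform g i + fm_transform h i.
Proof. apply functional_extensionality. intros [[y Hy] | [[y z] Hyz]]; simpl; ring. Qed.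

Lemma fm_transform_somewhere_pos (P : gset Y) :
  cone P -> P c -> (forall g, P g -> exists y, 0 < g y) ->
  forall g, P g -> exists i, 0 < fm_transform g i.
Proof.
  intros [Hscal Hadd] Pc Hpos g Pg. apply NNPP. intros Hno.
  assert (Hle : forall i, fm_transform g i <= 0).
  { intros i. apply Rnot_lt_le. intros Hi. apply Hno. eauto. }
  destruct (Hpos c Pc) as [y0 Hy0].
  destruct (nonneg_multiplier c g y0 Hy0) as [l [Hl Hlg]].
  - intros y Hy. exact (Hle (inl (exist _ y Hy))).
  - intros y z Hy Hz. exact (Hle (inr (exist _ (y, z) (conj Hy Hz)))).
  - destruct (Req_dec l 0) as [-> | Hl0].
    + destruct (Hpos g Pg) as [y Hy]. specialize (Hlg y). lra.
    + destruct (Hpos (fun y => l * c y + g y)) as [y Hy]; [apply Hadd; auto; apply Hscal; auto; lra|].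
      specialize (Hlg y). lra.
Qed.

End FourierMotzkin.

Lemma cone_positive_weighting (n : nat) :
  forall (Y : Type) (P : gset Y) (gs : list (Y -> R)),
  length gs = n -> cone P -> (forall g, P g -> exists y, 0 < g y) -> Forall P gs ->
  exists nu, nonneg_weights nu /\ Forall (fun g => 0 < wsum nu g) gs.
Proof.
  induction n as [|n IH]; intros Y P gs Hlen Pcone Ppos Pgs.
  { destruct gs; [|discriminate]. exists nil. split; constructor. }
  destruct gs as [|c gs]; [discriminate|]. injection Hlen as Hlen.
  pose proof (Forall_inv Pgs) as Pc. apply Forall_inv_tail in Pgs.
  set (P' := fun h => exists g, P g /\ h = fm_transform Y c g).
  destruct (IH _ P' (map (fm_transform Y c) gs)) as [nu' [Hnu' Hpos']].
  - rewrite length_map. exact Hlen.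
  - destruct Pcone as [Hscal Hadd]. split.
    + intros h lam Hlam [g [Pg ->]]. exists (fun y => lam * g y).
      split; [auto | apply eq_sym, fm_transform_scal].
    + intros h h' [g [Pg ->]] [g' [Pg' ->]]. exists (fun y => g y + g' y).
      split; [auto | apply eq_sym, fm_transform_add].
  - intros h [g [Pg ->]]. exact (fm_transform_somewhere_pos Y c P Pcone Pc Ppos g Pg).
  - rewrite Forall_map. revert Pgs. apply Forall_impl. intros g Pg. exists g. auto.
  - set (nu1 := flat_map (fm_pullback Y c) nu').
    assert (Hnu1 : nonneg_weights nu1) by (apply fm_pullback_nonneg, Hnu').
    assert (Hc1 : 0 <= wsum nu1 c).
    { unfold nu1. rewrite wsum_fm_pullback. apply wsum_nonneg; [exact Hnu'|]. apply fm_transform_self_nonneg. }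
    assert (Hgs1 : Forall (fun g => 0 < wsum nu1 g) gs).
    { rewrite Forall_map in Hpos'. revert Hpos'. apply Forall_impl. intros g. unfold nu1. rewrite wsum_fm_pullback. auto. }
    destruct (Ppos c Pc) as [y0 Hy0].
    (* A unit mass at [y0] makes [c] positive; scaling up [nu1] keeps the others positive. *)
    destruct (exists_dominating_scale (map (fun g => (g y0, wsum nu1 g)) gs)) as [K [HK HKgs]].
    { rewrite Forall_map. exact Hgs1. }
    exists ((1, y0) :: map (fun p => (K * fst p, snd p)) nu1).
    assert (Hsum : forall g, wsum ((1, y0) :: map (fun p => (K * fst p, snd p)) nu1) g = g y0 + K * wsum nu1 g).
    { intros g. unfold wsum at 1. simpl. fold (wsum (map (fun p => (K * fst p, snd p)) nu1) g).
      rewrite wsum_rescale. ring. }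
    split.
    + constructor; [simpl; lra|]. rewrite Forall_map. revert Hnu1. apply Forall_impl. simpl. intros p Hp. nra.
    + constructor.
      * rewrite Hsum. nra.
      * rewrite Forall_map in HKgs. revert HKgs. apply Forall_impl. intros g. rewrite Hsum. auto.
Qed.

Lemma ind_true {X : Type} (B : X -> Prop) x : B x -> ind B x = 1.
Proof. unfold ind. destruct (excluded_middle_informative (B x)); tauto. Qed.

Lemma ind_bounds {X : Type} (B : X -> Prop) x : 0 <= ind B x <= 1.
Proof. unfold ind. destruct (excluded_middle_informative (B x)); lra. Qed.

Lemma bounded_mul_ind {Z X Y : Type} (f : X -> R) (p : Z -> X) (B : Y -> Prop) (q : Z -> Y) :
  bounded f -> bounded (fun z => f (p z) * ind B (q z)).
Proof.
  intros [M HM]. exists M. intros z. rewrite Rabs_mult.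
  pose proof (ind_bounds B (q z)). rewrite (Rabs_right (ind B (q z))) by lra.
  specialize (HM (p z)). pose proof (Rabs_pos (f (p z))). nra.
Qed.

Lemma bounded_lin {X : Type} (f g : X -> R) lam :
  bounded f -> bounded g -> bounded (fun x => lam * f x + g x).
Proof.
  intros [M HM] [N HN]. exists (Rabs lam * M + N). intros x.
  eapply Rle_trans; [apply Rabs_triang|]. rewrite Rabs_mult.
  specialize (HN x). assert (Rabs lam * Rabs (f x) <= Rabs lam * M) by (apply Rmult_le_compat_l; [apply Rabs_pos | auto]).
  lra.
Qed.

Section Coherence.
Variables (X : Type) (D : gset X).
Hypothesis hD : coherent D.

Lemma coherent_bounded f : D f -> bounded f.
Proof. apply hD. Qed.

Lemma coherent_Gpos f : Gpos f -> D f.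
Proof. intros [Hb [Hnn Hnz]]. apply hD; auto. Qed.

Lemma coherent_scale f lam : 0 < lam -> D f -> D (fun x => lam * f x).
Proof. apply hD. Qed.

Lemma coherent_add f g : D f -> D g -> D (fun x => f x + g x).
Proof. apply hD. Qed.

Lemma coherent_cone : cone D.
Proof. split; [exact coherent_scale | exact coherent_add]. Qed.

Lemma coherent_nonpos f : bounded f -> (forall x, f x <= 0) -> ~ D f.
Proof. apply hD. Qed.

Lemma coherent_somewhere_pos f : D f -> exists x, 0 < f x.
Proof.
  intros Hf. apply NNPP. intros Hno. apply (coherent_nonpos f (coherent_bounded f Hf)); [|exact Hf].
  intros x. apply Rnot_lt_le. intros Hx. apply Hno. eauto.
Qed.

Lemma coherent_up f g : D g -> bounded f -> (forall x, g x <= f x) -> D f.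
Proof.
  intros Hg Hf Hle. destruct (classic (exists x, f x - g x <> 0)) as [Hnz | Hz].
  - replace f with (fun x => g x + (f x - g x)) by (apply functional_extensionality; intros; ring).
    apply coherent_add; [exact Hg|]. apply coherent_Gpos. split; [|split; [|exact Hnz]].
    + replace (fun x => f x - g x) with (fun x => -1 * g x + f x)
        by (apply functional_extensionality; intros; ring).
      apply bounded_lin; [apply coherent_bounded|]; assumption.
    + intros x. specialize (Hle x). lra.
  - replace f with g; [exact Hg|]. apply functional_extensionality. intros x.
    apply NNPP. intros Hx. apply Hz. exists x. lra.
Qed.

Lemma coherent_ind (B : X -> Prop) : (exists x, B x) -> D (ind B).
Proof.
  intros [x Hx]. apply coherent_Gpos. split; [|split].
  - exists 1. intros y. pose proof (ind_bounds B y). rewrite Rabs_right; lra.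
  - intros y. apply ind_bounds.
  - exists x. rewrite ind_true by exact Hx. lra.
Qed.

Lemma coherent_posi f : posi D f -> D f.
Proof.
  intros [l [Hnil [Hl Hf]]]. replace f with (fun x => wsum l (fun g => g x))
    by (apply functional_extensionality; intros; rewrite Hf; reflexivity).
  clear f Hf. induction Hl as [|[lam g] l [Hlam Hg] Hl IH]; [congruence|].
  change (D (fun x => lam * g x + wsum l (fun h => h x))).
  destruct l as [|q l].
  - replace (fun x => lam * g x + wsum nil (fun h => h x)) with (fun x => lam * g x)
      by (apply functional_extensionality; intros; unfold wsum; simpl; ring).
    apply coherent_scale; assumption.
  - apply coherent_add; [apply coherent_scale; assumption | apply IH; discriminate].
Qed.

End Coherence.

Corollary coherent_positive_weighting {Y : Type} (D : gset Y) (gs : list (Y -> R)) :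
  coherent D -> Forall D gs -> exists nu, nonneg_weights nu /\ Forall (fun g => 0 < wsum nu g) gs.
Proof.
  intros hD Hgs. apply (cone_positive_weighting (length gs) Y D gs eq_refl); [| |exact Hgs].
  - apply coherent_cone, hD.
  - apply coherent_somewhere_pos, hD.
Qed.

Section Posi.
Variables (X : Type) (A : gset X).

Lemma posi_single f : A f -> posi A f.
Proof.
  intros Hf. exists ((1, f) :: nil). split; [discriminate|]. split.
  - repeat constructor. simpl; lra. exact Hf.
  - intros x. simpl. ring.
Qed.

Lemma posi_scale f lam : 0 < lam -> posi A f -> posi A (fun x => lam * f x).
Proof.
  intros Hlam [l [Hnil [Hl Hf]]]. exists (map (fun p => (lam * fst p, snd p)) l). split; [|split].
  - destruct l; [congruence | discriminate].
  - rewrite Forall_map. revert Hl. apply Forall_impl. intros p [Hp HA]. split; [simpl; nra | exact HA].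
  - intros x. change (lam * f x = wsum (map (fun p => (lam * fst p, snd p)) l) (fun g => g x)).
    rewrite wsum_rescale, Hf. reflexivity.
Qed.

Lemma posi_add f g : posi A f -> posi A g -> posi A (fun x => f x + g x).
Proof.
  intros [l [Hnil [Hl Hf]]] [l' [_ [Hl' Hg]]]. exists (l ++ l'). split; [|split].
  - destruct l; [congruence | discriminate].
  - apply Forall_app. split; assumption.
  - intros x. change (f x + g x = wsum (l ++ l') (fun h => h x)). rewrite wsum_app, Hf, Hg. reflexivity.
Qed.

Lemma posi_mono (A' : gset X) f : (forall g, A g -> A' g) -> posi A f -> posi A' f.
Proof.
  intros HAA' [l [Hnil [Hl Hf]]]. exists l. split; [exact Hnil|]. split; [|exact Hf].
  revert Hl. apply Forall_impl. intros p [Hp HA]. auto.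
Qed.

Lemma posi_bounded f : (forall g, A g -> bounded g) -> posi A f -> bounded f.
Proof.
  intros HA [l [_ [Hl Hf]]]. replace f with (fun x => wsum l (fun g => g x))
    by (apply functional_extensionality; intros; rewrite Hf; reflexivity).
  clear f Hf. induction Hl as [|[lam g] l [_ Hg] _ IH].
  - exists 0. intros x. unfold wsum. simpl. rewrite Rabs_R0. lra.
  - apply (bounded_lin g (fun x => wsum l (fun h => h x)) lam); [apply HA, Hg | exact IH].
Qed.

End Posi.

Section NaturalExtension.
Variables (X : Type) (A : gset X).

Lemma E_of_gen f : A f -> E A f.
Proof. intros Hf. apply posi_single. left. exact Hf. Qed.

Lemma E_of_Gpos f : Gpos f -> E A f.
Proof. intros Hf. apply posi_single. right. exact Hf. Qed.

Lemma E_bounded f : (forall g, A g -> bounded g) -> E A f -> bounded f.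
Proof. intros HA. apply posi_bounded. intros g [Hg | [Hg _]]; auto. Qed.

Lemma E_cases f :
  E A f -> ((forall x, 0 <= f x) /\ exists x, f x <> 0) \/ exists g, posi A g /\ forall x, g x <= f x.
Proof.
  intros [l [Hnil [Hl Hf]]].
  replace f with (fun x => wsum l (fun h => h x))
    by (apply functional_extensionality; intros; rewrite Hf; reflexivity).
  clear f Hf.
  assert (Hstep : forall (F : X -> R) lam t, 0 < lam -> A t \/ Gpos t ->
            (forall x, 0 <= F x) \/ (exists g, posi A g /\ forall x, g x <= F x) ->
            ((forall x, 0 <= lam * t x + F x) /\ exists x, lam * t x + F x <> 0) \/
            exists g, posi A g /\ forall x, g x <= lam * t x + F x).
  { intros F lam t Hlam [Ht | [_ [Htnn [x0 Hx0]]]] [HF | [g [Hg HgF]]].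
    - right. exists (fun x => lam * t x). split; [apply posi_scale, posi_single; assumption|].
      intros x. specialize (HF x). lra.
    - right. exists (fun x => lam * t x + g x). split; [apply posi_add; [apply posi_scale, posi_single|]; assumption|].
      intros x. specialize (HgF x). lra.
    - left. split.
      + intros x. specialize (HF x). specialize (Htnn x). nra.
      + exists x0. specialize (HF x0). specialize (Htnn x0).
        assert (0 < lam * t x0) by (apply Rmult_lt_0_compat; lra). lra.
    - right. exists g. split; [exact Hg|]. intros x. specialize (HgF x). specialize (Htnn x). nra. }
  assert (Hweak : forall l, Forall (fun p => 0 < fst p /\ (A (snd p) \/ Gpos (snd p))) l ->
            (forall x, 0 <= wsum l (fun h => h x)) \/
            exists g, posi A g /\ forall x, g x <= wsum l (fun h => h x)).
  { clear l Hnil Hl. induction 1 as [|[lam t] l [Hlam Ht] _ IH].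
    - left. intros x. unfold wsum. simpl. lra.
    - destruct (Hstep (fun x => wsum l (fun h => h x)) lam t Hlam Ht IH) as [[Hnn _] | Hg].
      + left. exact Hnn.
      + right. exact Hg. }
  destruct l as [|[lam t] l]; [congruence|].
  destruct (Forall_inv Hl) as [Hlam Ht].
  exact (Hstep (fun x => wsum l (fun h => h x)) lam t Hlam Ht (Hweak l (Forall_inv_tail Hl))).
Qed.

Lemma E_comp {Z : Type} (A' : gset Z) (s : Z -> X) f :
  (forall x, exists z, s z = x) -> (forall g, A g -> A' (fun z => g (s z))) ->
  E A f -> E A' (fun z => f (s z)).
Proof.
  intros Hsurj HAA' [l [Hnil [Hl Hf]]].
  exists (map (fun p => (fst p, fun z => snd p (s z))) l). split; [|split].
  - destruct l; [congruence | discriminate].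
  - rewrite Forall_map. revert Hl. apply Forall_impl. intros [lam g] [Hlam Hg]. split; [exact Hlam|].
    destruct Hg as [Hg | [[M HM] [Hnn [x Hx]]]]; [left; apply HAA', Hg | right; split; [|split]].
    + exists M. intros z. apply HM.
    + intros z. apply Hnn.
    + destruct (Hsurj x) as [z <-]. exists z. exact Hx.
  - intros z. change (f (s z) = wsum (map (fun p => (fst p, fun z => snd p (s z))) l) (fun h => h z)).
    rewrite (wsum_map l (fun g z => g (s z))). apply Hf.
Qed.

End NaturalExtension.

Definition cond_event {X : Type} (BB : (X -> Prop) -> Prop) (B : X -> Prop) : Prop :=
  BB B \/ B = (fun _ => True).

Definition section_wsum {X1 X2 : Type} (nu : list (R * X2)) (h : X1 * X2 -> R) (x : X1) : R :=
  wsum nu (fun y => h (x, y)).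

Lemma cond_event_inhabited {X : Type} (BB : (X -> Prop) -> Prop) (x0 : X) B :
  (forall B, BB B -> exists x, B x) -> cond_event BB B -> exists x, B x.
Proof. intros hB [HB | ->]; [exact (hB B HB) | exists x0; exact I]. Qed.

Lemma marg1_cmarg1_sure {X1 X2 : Type} (D : gset (X1 * X2)) :
  gset_eq (marg1 D) (cmarg1 D (fun _ => True)).
Proof.
  intros f. unfold marg1, cmarg1.
  replace (fun z : X1 * X2 => f (fst z) * ind (fun _ => True) (snd z)) with (fun z : X1 * X2 => f (fst z));
    [reflexivity|].
  apply functional_extensionality. intros z. rewrite ind_true by exact I. ring.
Qed.

Lemma marg2_cmarg2_sure {X1 X2 : Type} (D : gset (X1 * X2)) :
  gset_eq (marg2 D) (cmarg2 D (fun _ => True)).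
Proof.
  intros f. unfold marg2, cmarg2.
  replace (fun z : X1 * X2 => f (snd z) * ind (fun _ => True) (fst z)) with (fun z : X1 * X2 => f (snd z));
    [reflexivity|].
  apply functional_extensionality. intros z. rewrite ind_true by exact I. ring.
Qed.

Section IndependentNaturalExtension.
Context {X1 X2 : Type} (x1 : X1) (x2 : X2)
  (BB1 : (X1 -> Prop) -> Prop) (BB2 : (X2 -> Prop) -> Prop)
  (hB1 : forall B, BB1 B -> exists x, B x) (hB2 : forall B, BB2 B -> exists x, B x)
  (D1 : gset X1) (D2 : gset X2) (hD1 : coherent D1) (hD2 : coherent D2).

Lemma generator_section_in_D1 h :
  A12 BB1 D2 h \/ A21 BB2 D1 h ->
  exists g2, D2 g2 /\ forall nu, nonneg_weights nu -> 0 < wsum nu g2 -> D1 (section_wsum nu h).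
Proof.
  intros [[f2 [B1 [Hf2 [HB1 ->]]]] | [f1 [B2 [Hf1 [HB2 ->]]]]].
  - exists f2. split; [exact Hf2|]. intros nu _ Hpos.
    replace (section_wsum nu _) with (fun x => wsum nu f2 * ind B1 x)
      by (apply functional_extensionality; intros x; unfold section_wsum; simpl; rewrite wsum_scal_r; ring).
    apply coherent_scale; [exact hD1 | exact Hpos|].
    apply coherent_ind; [exact hD1|]. exact (cond_event_inhabited BB1 x1 B1 hB1 HB1).
  - exists (ind B2). split; [apply coherent_ind; [exact hD2 | exact (cond_event_inhabited BB2 x2 B2 hB2 HB2)]|].
    intros nu _ Hpos.
    replace (section_wsum nu _) with (fun x => wsum nu (ind B2) * f1 x)
      by (apply functional_extensionality; intros x; unfold section_wsum; simpl; rewrite wsum_scal; ring).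
    apply coherent_scale; assumption.
Qed.

Lemma posi_generators_section_in_D1 g :
  posi (fun h => A12 BB1 D2 h \/ A21 BB2 D1 h) g ->
  exists gs, Forall D2 gs /\
    forall nu, nonneg_weights nu -> Forall (fun g2 => 0 < wsum nu g2) gs -> D1 (section_wsum nu g).
Proof.
  intros [l [Hnil [Hl Hg]]].
  assert (Hterms : exists gs, Forall D2 gs /\
            forall nu, nonneg_weights nu -> Forall (fun g2 => 0 < wsum nu g2) gs ->
            Forall (fun p => 0 < fst p /\ D1 (section_wsum nu (snd p))) l).
  { clear Hnil Hg. induction Hl as [|[lam h] l [Hlam Hh] _ [gs [Hgs Hsec]]].
    - exists nil. split; [constructor|]. intros. constructor.
    - destruct (generator_section_in_D1 h Hh) as [g2 [Hg2 Hsec2]].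
      exists (g2 :: gs). split; [constructor; assumption|]. intros nu Hnu Hpos.
      constructor; [split; [exact Hlam | apply Hsec2, (Forall_inv Hpos); exact Hnu]|].
      apply Hsec, (Forall_inv_tail Hpos); exact Hnu. }
  destruct Hterms as [gs [Hgs Hsec]]. exists gs. split; [exact Hgs|]. intros nu Hnu Hpos.
  apply coherent_posi; [exact hD1|].
  exists (map (fun p => (fst p, section_wsum nu (snd p))) l). split; [|split].
  - destruct l; [congruence | discriminate].
  - rewrite Forall_map. exact (Hsec nu Hnu Hpos).
  - intros x. change (section_wsum nu g x = wsum (map (fun p => (fst p, section_wsum nu (snd p))) l) (fun a => a x)).
    rewrite wsum_map. unfold section_wsum.
    rewrite <- (wsum_comm nu l (fun y a => a (x, y))).
    f_equal. apply functional_extensionality. intros y. apply Hg.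
Qed.

Lemma indep_nat_ext_cmarg1_D1 C f :
  cond_event BB2 C -> bounded f ->
  indep_nat_ext BB1 BB2 D1 D2 (fun z => f (fst z) * ind C (snd z)) -> D1 f.
Proof.
  intros HC Hf HE. destruct (cond_event_inhabited BB2 x2 C hB2 HC) as [y0 Hy0].
  destruct (E_cases _ _ _ HE) as [[Hnn [z Hz]] | [g [Hg Hgf]]].
  - apply coherent_Gpos; [exact hD1|]. split; [exact Hf | split].
    + intros x. specialize (Hnn (x, y0)). simpl in Hnn. rewrite ind_true in Hnn by exact Hy0. lra.
    + exists (fst z). intros Hf0. apply Hz. rewrite Hf0. ring.
  - destruct (posi_generators_section_in_D1 g Hg) as [gs [Hgs Hsec]].
    destruct (coherent_positive_weighting D2 (ind C :: gs)) as [nu [Hnu Hpos]].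
    { exact hD2. }
    { constructor; [apply coherent_ind; [exact hD2 | exists y0; exact Hy0] | exact Hgs]. }
    pose proof (Forall_inv Hpos) as HC0. simpl in HC0. set (e := wsum nu (ind C)) in HC0.
    apply (coherent_up X1 D1 hD1 f (fun x => / e * section_wsum nu g x)); [| exact Hf |].
    + apply coherent_scale; [exact hD1 | apply Rinv_0_lt_compat, HC0 | apply Hsec, (Forall_inv_tail Hpos); exact Hnu].
    + intros x.
      assert (Hle : section_wsum nu g x <= f x * e).
      { unfold section_wsum, e. rewrite <- wsum_scal. apply wsum_le; [exact Hnu|]. intros y. exact (Hgf (x, y)). }
      apply (Rmult_le_compat_l (/ e)) in Hle; [|left; apply Rinv_0_lt_compat, HC0].
      replace (/ e * (f x * e)) with (f x) in Hle by (field; lra). exact Hle.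
Qed.

Lemma indep_nat_ext_cmarg1 C : cond_event BB2 C -> gset_eq (cmarg1 (indep_nat_ext BB1 BB2 D1 D2) C) D1.
Proof.
  intros HC f. split.
  - intros [Hf HE]. exact (indep_nat_ext_cmarg1_D1 C f HC Hf HE).
  - intros Hf. split; [exact (coherent_bounded X1 D1 hD1 f Hf)|].
    apply E_of_gen. right. exists f, C. auto.
Qed.

Lemma indep_nat_ext_coherent : coherent (indep_nat_ext BB1 BB2 D1 D2).
Proof.
  split; [|split; [|split; [|split]]].
  - intros f. apply E_bounded.
    intros g [[f2 [B1 [Hf2 [_ ->]]]] | [f1 [B2 [Hf1 [_ ->]]]]]; apply bounded_mul_ind.
    + exact (coherent_bounded X2 D2 hD2 f2 Hf2).
    + exact (coherent_bounded X1 D1 hD1 f1 Hf1).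
  - intros f Hb Hnn Hnz. apply E_of_Gpos. split; [|split]; assumption.
  - intros f lam Hlam Hf. apply posi_scale; assumption.
  - intros f g Hf Hg. apply posi_add; assumption.
  - intros f _ Hle Hf. destruct (E_cases _ _ _ Hf) as [[Hnn [x Hx]] | [g [Hg Hgf]]].
    + apply Hx. specialize (Hnn x). specialize (Hle x). lra.
    + (* the [X1]-section of [g] would be a non-positive element of [D1] *)
      destruct (posi_generators_section_in_D1 g Hg) as [gs [Hgs Hsec]].
      destruct (coherent_positive_weighting D2 gs hD2 Hgs) as [nu [Hnu Hpos]].
      destruct (coherent_somewhere_pos X1 D1 hD1 _ (Hsec nu Hnu Hpos)) as [x Hx].
      assert (Hsec_le : section_wsum nu g x <= wsum nu (fun _ => 0)).
      { apply wsum_le; [exact Hnu|]. intros y. specialize (Hgf (x, y)). specialize (Hle (x, y)). simpl. lra. }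
      rewrite wsum_zero in Hsec_le. lra.
Qed.

End IndependentNaturalExtension.

Lemma indep_nat_ext_swap {X1 X2 : Type} (BB1 : (X1 -> Prop) -> Prop) (BB2 : (X2 -> Prop) -> Prop)
    (D1 : gset X1) (D2 : gset X2) g :
  indep_nat_ext BB1 BB2 D1 D2 g -> indep_nat_ext BB2 BB1 D2 D1 (fun z => g (snd z, fst z)).
Proof.
  apply E_comp.
  - intros [y x]. exists (x, y). reflexivity.
  - intros h [[f2 [B1 [Hf2 [HB1 ->]]]] | [f1 [B2 [Hf1 [HB2 ->]]]]].
    + right. exists f2, B1. auto.
    + left. exists f1, B2. auto.
Qed.

Lemma indep_nat_ext_cmarg2 {X1 X2 : Type} (x1 : X1) (x2 : X2)
    (BB1 : (X1 -> Prop) -> Prop) (BB2 : (X2 -> Prop) -> Prop)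
    (hB1 : forall B, BB1 B -> exists x, B x) (hB2 : forall B, BB2 B -> exists x, B x)
    (D1 : gset X1) (D2 : gset X2) (hD1 : coherent D1) (hD2 : coherent D2) C :
  cond_event BB1 C -> gset_eq (cmarg2 (indep_nat_ext BB1 BB2 D1 D2) C) D2.
Proof.
  intros HC f. split.
  - intros [Hf HE]. apply indep_nat_ext_swap in HE.
    exact (indep_nat_ext_cmarg1_D1 x2 x1 BB2 BB1 hB2 hB1 D2 D1 hD2 hD1 C f HC Hf HE).
  - intros Hf. split; [exact (coherent_bounded X2 D2 hD2 f Hf)|].
    apply E_of_gen. left. exists f, C. auto.
Qed.

Section IndependentProducts.
Context {X1 X2 : Type} (BB1 : (X1 -> Prop) -> Prop) (BB2 : (X2 -> Prop) -> Prop)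
  (D1 : gset X1) (D2 : gset X2) (D : gset (X1 * X2)) (hD : indep_product BB1 BB2 D1 D2 D).

Lemma indep_product_cmarg1 C : cond_event BB2 C -> gset_eq (cmarg1 D C) D1.
Proof.
  destruct hD as [[_ [Hc1 _]] [Hm1 _]]. intros [HC | ->] f.
  - rewrite (Hc1 C HC f). apply Hm1.
  - rewrite <- (marg1_cmarg1_sure D f). apply Hm1.
Qed.

Lemma indep_product_cmarg2 C : cond_event BB1 C -> gset_eq (cmarg2 D C) D2.
Proof.
  destruct hD as [[_ [_ Hc2]] [_ Hm2]]. intros [HC | ->] f.
  - rewrite (Hc2 C HC f). apply Hm2.
  - rewrite <- (marg2_cmarg2_sure D f). apply Hm2.
Qed.

Lemma indep_nat_ext_least f : indep_nat_ext BB1 BB2 D1 D2 f -> D f.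
Proof.
  destruct hD as [[HcD _] _]. intros Hf. apply (coherent_posi _ D HcD). revert Hf. apply posi_mono.
  intros g [[[f2 [B1 [Hf2 [HB1 ->]]]] | [f1 [B2 [Hf1 [HB2 ->]]]]] | Hg].
  - exact (proj2 (proj2 (indep_product_cmarg2 B1 HB1 f2) Hf2)).
  - exact (proj2 (proj2 (indep_product_cmarg1 B2 HB2 f1) Hf1)).
  - exact (coherent_Gpos _ D HcD g Hg).
Qed.

End IndependentProducts.

Theorem theorem16 (X1 X2 : Type) (x1 : X1) (x2 : X2)
    (BB1 : (X1 -> Prop) -> Prop) (BB2 : (X2 -> Prop) -> Prop)
    (hB1 : forall B, BB1 B -> exists x, B x)
    (hB2 : forall B, BB2 B -> exists x, B x)
    (D1 : gset X1) (D2 : gset X2)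
    (hD1 : coherent D1) (hD2 : coherent D2) :
  indep_product BB1 BB2 D1 D2 (indep_nat_ext BB1 BB2 D1 D2) /\
  (forall D : gset (X1 * X2), indep_product BB1 BB2 D1 D2 D ->
     forall f, indep_nat_ext BB1 BB2 D1 D2 f -> D f).
Proof.
  pose proof (indep_nat_ext_cmarg1 x1 x2 BB1 BB2 hB1 hB2 D1 D2 hD1 hD2) as Hc1.
  pose proof (indep_nat_ext_cmarg2 x1 x2 BB1 BB2 hB1 hB2 D1 D2 hD1 hD2) as Hc2.
  split; [|exact (indep_nat_ext_least BB1 BB2 D1 D2)].
  split; [split; [|split] | split].
  - exact (indep_nat_ext_coherent x1 x2 BB1 BB2 hB1 hB2 D1 D2 hD1 hD2).
  - intros B2 HB2 f. rewrite (Hc1 B2 (or_introl HB2) f), (marg1_cmarg1_sure _ f).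
    symmetry. exact (Hc1 _ (or_intror eq_refl) f).
  - intros B1 HB1 f. rewrite (Hc2 B1 (or_introl HB1) f), (marg2_cmarg2_sure _ f).
    symmetry. exact (Hc2 _ (or_intror eq_refl) f).
  - intros f. rewrite (marg1_cmarg1_sure _ f). exact (Hc1 _ (or_intror eq_refl) f).
  - intros f. rewrite (marg2_cmarg2_sure _ f). exact (Hc2 _ (or_intror eq_refl) f).
Qed.
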